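(* Let $G$ be a finite bipartite graph and let $e_1=\{b_1,w_1\},\dots,e_n=\{b_n,w_n\}$ be pairwise vertex-disjoint edges, with $b_i$ black and $w_i$ white. Let $G^e=G-\{e_1,\dots,e_n\}$ (edges deleted) and $G'=G-\{b_1,w_1,\dots,b_n,w_n\}$ (vertices deleted). Suppose that for every $i$ there is a nonempty channel $B_i\in\mathcal{C}_B(G^e)$ with $B_i\cap\{b_1,\dots,b_n\}\subseteq\{b_i\}$. Then $m_G\equiv m_{G'}\pmod 2$. If moreover $B_i\cap\{b_1,\dots,b_n\}=\{b_i\}$ for all $i$, then $|\mathcal{C}_B(G)|=|\mathcal{C}_B(G')|$.
   Context: $m_H$ is the number of perfect matchings of $H$. A channel of a graph $H$ is a vertex set $C$ such that every vertex of $H$ is adjacent to an even number of vertices of $C$ (empty set included). For bipartite $H$ with black/white coloring, $\mathcal{C}_B(H)$ is the set of channels consisting only of black vertices. *)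

(* A graph is given by a vertex set V : {set T} over a
   finite type T together with an adjacency relation adj : rel T
   (only adjacency between vertices of V matters). *)
From mathcomp Require Import all_boot.
Set Implicit Arguments. Unset Strict Implicit. Unset Printing Implicit Defensive.

Section Graphs.
Variable T : finType.

Definition is_perfect_matching (V : {set T}) (adj : rel T)
    (M : {set {set T}}) : bool :=
  [forall E in M, exists x, exists y,
      [&& E == [set x; y], x != y, adj x y, x \in V & y \in V]]
  && [forall v in V, #|[set E in M | v \in E]| == 1].

Definition num_pm (V : {set T}) (adj : rel T) : nat :=
  #|[set M : {set {set T}} | is_perfect_matching V adj M]|.

Definition is_channel (V : {set T}) (adj : rel T) (C : {set T}) : bool :=
  (C \subset V) && [forall v in V, ~~ odd #|[set u in C | adj v u]|].

(* C_B(H): channels consisting only of black vertices (col x = true). *)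
Definition black_channels (V : {set T}) (adj : rel T) (col : T -> bool)
    : {set {set T}} :=
  [set C : {set T} | is_channel V adj C && [forall x in C, col x]].

End Graphs.

From mathcomp Require Import all_boot.
Set Implicit Arguments. Unset Strict Implicit. Unset Printing Implicit Defensive.

(* A graph with a nonempty channel C has an even number of perfect matchings.
   Fix c0 in C and let f(c) be the sum of m(G - c0 - y) over the neighbours
   y <> c0 of c.  Then f(c0) = m(G); for c <> c0, expanding each m(G - c0 - y)
   along c turns f(c) into a double sum over pairs of neighbours of c that is
   symmetric, hence even; and the sum of f(c) over C counts each m(G - c0 - y)
   once for each of the evenly many vertices of C adjacent to y.  As
   m(G) = m(G - e) + m(G - b - w) for an edge e = {b, w}, and B_i is a nonempty
   channel of G - e_i (no other e_j has an endpoint in B_i), the edges e_i can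
   be removed one at a time without changing m modulo 2.

   For the channels, the parity of the number of neighbours of v in X is
   additive in X under symmetric difference, and in G the set B_i has odd
   parity exactly at w_i.  Hence
   C |-> C + sum of the B_i with b_i in C (sums taken mod 2) sends the black
   channels of G to those of G', and C |-> C + sum of the B_i with w_i of odd
   parity for C is its inverse. *)

Lemma sum_nat_bool_card (I : finType) (A : {pred I}) (P : pred I) :
  \sum_(i in A) (P i : nat) = #|[set i in A | P i]|.
Proof. by rewrite -sum1dep_card big_mkcondr; apply: eq_bigr => i _; case: (P i). Qed.

Lemma even_sum (I : finType) (P : pred I) (F : I -> nat) :
  (forall i, P i -> ~~ odd (F i)) -> ~~ odd (\sum_(i | P i) F i).
Proof.
move=> evenF; apply: (big_ind (fun m => ~~ odd m)) => // m1 m2 ev1 ev2.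
by rewrite oddD (negbTE ev1) (negbTE ev2).
Qed.

Lemma even_sum_offdiag (I : finType) (P : {pred I}) (f : I -> I -> nat) :
  (forall y z, f y z = f z y) -> ~~ odd (\sum_(y in P) \sum_(z in P | z != y) f y z).
Proof.
move=> f_sym; pose r (y : I) : nat := enum_rank y.
have split_ne y : \sum_(z in P | z != y) f y z =
    \sum_(z in P | r z < r y) f y z + \sum_(z in P | r y < r z) f y z.
  have ne_r z : (z != y) = (r z != r y) by rewrite val_eqE (inj_eq enum_rank_inj).
  rewrite (bigID (fun z => r z < r y)) /=; congr (_ + _); apply: eq_bigl => z;
    by rewrite ne_r; case: (z \in P); case: ltngtP.
rewrite (eq_bigr _ (fun y _ => split_ne y)) big_split /=.
have -> : \sum_(y in P) \sum_(z in P | r y < r z) f y z =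
          \sum_(y in P) \sum_(z in P | r z < r y) f y z.
  rewrite (exchange_big_dep P) /=; last by move=> y z _ /andP[].
  apply: eq_big => // z zP; apply: eq_big => [y|y _]; last exact: f_sym.
  by rewrite !unfold_in zP.
by rewrite oddD addbb.
Qed.

Lemma odd_card_set (I : finType) (P : pred I) :
  odd #|[set i | P i]| = \big[addb/false]_i P i.
Proof.
rewrite -sum1dep_card (big_morph odd oddD (erefl (odd 0))) big_mkcond.
by apply: eq_bigr => i _; case: (P i).
Qed.

Lemma odd_card_inj (I J : finType) (f : I -> J) (S : {set I}) y : injective f ->
  odd #|[set i in S | y == f i]| = (y \in f @: S).
Proof.
move=> f_inj; have [/imsetP[j jS ->]|ySf] := boolP (y \in f @: S).
  rewrite (_ : [set i in S | f j == f i] = [set j]) ?cards1 //.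
  by apply/setP => i; rewrite !inE (inj_eq f_inj) eq_sym andb_idl // => /eqP->.
rewrite (_ : [set i in S | y == f i] = set0) ?cards0 //; apply/setP => i.
by rewrite !inE; apply: contraNF ySf => /andP[iS /eqP->]; rewrite imset_f.
Qed.

Lemma card_in_bij (aT rT : finType) (A : {set aT}) (B : {set rT}) f g :
    {in A, forall x, f x \in B} -> {in B, forall y, g y \in A} ->
    {in A, cancel f g} -> {in B, cancel g f} ->
  #|A| = #|B|.
Proof.
move=> fA gB fK gK; rewrite -(card_in_imset (can_in_inj fK)); apply: eq_card => y.
apply/imsetP/idP => [[x xA ->]|yB]; first exact: fA.
by exists (g y); rewrite ?gB ?gK.
Qed.

Lemma eq_num_pm (T : finType) (V : {set T}) (adj1 adj2 : rel T) :
  {in V &, adj1 =2 adj2} -> num_pm V adj1 = num_pm V adj2.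
Proof.
move=> eq_adj; apply: eq_card => M; rewrite !inE /is_perfect_matching; congr andb.
apply: eq_forallb => E; congr (_ ==> _); apply: eq_existsb => x; apply: eq_existsb => y.
by case xV: (x \in V); case yV: (y \in V); rewrite ?andbF // eq_adj.
Qed.

Section PerfectMatchings.

Variables (T : finType) (adj : rel T).
Hypotheses (adj_sym : symmetric adj) (adj_irr : irreflexive adj).
Implicit Types (V : {set T}) (M N : {set {set T}}) (E : {set T}) (x y v : T).

Lemma adj_neq x y : adj x y -> x != y.
Proof. by apply: contraTneq => ->; rewrite adj_irr. Qed.

Lemma pm_edge V M E : is_perfect_matching V adj M -> E \in M ->
  exists x y, [/\ E = [set x; y], adj x y, x \in V & y \in V].
Proof.
case/andP=> /forallP/(_ E) + _ EM; rewrite EM => /existsP[x /existsP[y]].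
by case/and5P=> /eqP-> *; exists x, y.
Qed.

Lemma pm_cover V M v : is_perfect_matching V adj M -> v \in V ->
  #|[set E in M | v \in E]| = 1.
Proof. by case/andP=> _ /forallP/(_ v) + vV; rewrite vV => /eqP. Qed.

Lemma pm_intro V M :
    (forall E, E \in M -> exists x y, [/\ E = [set x; y], adj x y, x \in V & y \in V]) ->
    (forall v, v \in V -> #|[set E in M | v \in E]| = 1) ->
  is_perfect_matching V adj M.
Proof.
move=> edgeM coverM; apply/andP; split; apply/forallP => E; apply/implyP.
  case/edgeM=> x [y [-> axy xV yV]]; apply/existsP; exists x; apply/existsP; exists y.
  by rewrite /= eqxx (adj_neq axy) axy xV yV.
by move/coverM->.
Qed.

Lemma pm_sub V M E : is_perfect_matching V adj M -> E \in M -> E \subset V.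
Proof.
move=> pmM EM; have [x [y [-> _ xV yV]]] := pm_edge pmM EM.
by apply/subsetP=> z; rewrite !inE => /orP[] /eqP->.
Qed.

Lemma pm_uniq V M v E1 E2 : is_perfect_matching V adj M ->
  E1 \in M -> E2 \in M -> v \in E1 -> v \in E2 -> E1 = E2.
Proof.
move=> pmM E1M E2M vE1 vE2.
have /eqP/cards1P[E0 defE0] := pm_cover pmM (subsetP (pm_sub pmM E1M) v vE1).
have : E1 \in [set E in M | v \in E] by rewrite inE E1M.
have : E2 \in [set E in M | v \in E] by rewrite inE E2M.
by rewrite defE0 !inE => /eqP-> /eqP->.
Qed.

Lemma pm_setU1 V N x y : adj x y -> x \in V -> y \in V ->
  is_perfect_matching (V :\: [set x; y]) adj N ->
  is_perfect_matching V adj ([set x; y] |: N).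
Proof.
move=> axy xV yV pmN; apply: pm_intro => [E|v vV].
  rewrite !inE => /orP[/eqP->|EN]; first by exists x, y.
  have [u [z [-> auz]]] := pm_edge pmN EN.
  by rewrite !inE => /andP[_ uV] /andP[_ zV]; exists u, z.
have [vxy|vxy] := boolP (v \in [set x; y]).
  apply/eqP/cards1P; exists [set x; y]; apply/setP => E; rewrite !inE.
  apply/andP/eqP => [[/orP[/eqP //|EN] vE]|->]; last by rewrite eqxx.
  by move: (subsetP (pm_sub pmN EN) v vE); rewrite inE vxy.
have vV' : v \in V :\: [set x; y] by rewrite inE vxy.
rewrite -(pm_cover pmN vV'); apply: eq_card => E; rewrite !inE.
by case: (E =P [set x; y]) => [->|] //=; rewrite (negbTE vxy) andbF.
Qed.

Lemma pm_setD1 V M x y : is_perfect_matching V adj M -> [set x; y] \in M ->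
  is_perfect_matching (V :\: [set x; y]) adj (M :\ [set x; y]).
Proof.
move=> pmM xyM; apply: pm_intro => [E|v].
  rewrite !inE => /andP[neE EM]; have [u [z [defE auz uV zV]]] := pm_edge pmM EM.
  have outxy t : t \in E -> t \notin [set x; y].
    by move=> tE; apply: contra neE => txy; rewrite (pm_uniq pmM EM xyM tE txy).
  exists u, z; rewrite !inE uV zV !andbT -!in_set2.
  by split; rewrite // outxy // defE !inE eqxx ?orbT.
rewrite inE => /andP[vxy vV]; rewrite -(pm_cover pmM vV); apply: eq_card => E.
by rewrite !inE; case: (E =P [set x; y]) => [->|] //=; rewrite (negbTE vxy) andbF.
Qed.

Lemma pm_partner V M x : is_perfect_matching V adj M -> x \in V ->
  \sum_(y in V | adj x y) ([set x; y] \in M : nat) = 1.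
Proof.
move=> pmM xV; have /eqP/cards1P[E0 defE0] := pm_cover pmM xV.
have : E0 \in [set E in M | x \in E] by rewrite defE0 inE.
rewrite inE => /andP[E0M xE0].
have [y [defE0y yV axy]] : exists y, [/\ E0 = [set x; y], y \in V & adj x y].
  have [u [z [defE auz uV zV]]] := pm_edge pmM E0M.
  move: xE0; rewrite defE !inE => /orP[]/eqP xu; subst; first by exists z.
  by exists u; rewrite setUC adj_sym.
rewrite (bigD1 y) ?yV ?axy //= -defE0y E0M big1 // => z /andP[/andP[_ axz] nzy].
apply/eqP; rewrite eqb0; apply: contra nzy => xzM.
have := pm_uniq pmM xzM E0M (setU11 x [set z]) xE0; rewrite defE0y => /setP/(_ z).
by rewrite !inE eqxx orbT eq_sym (negbTE (adj_neq axz)).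
Qed.

Lemma num_pm_expand V x : x \in V ->
  num_pm V adj = \sum_(y in V | adj x y) num_pm (V :\: [set x; y]) adj.
Proof.
move=> xV; rewrite /num_pm -sum1_card.
rewrite (eq_bigr (fun M => \sum_(y in V | adj x y) ([set x; y] \in M : nat)));
  last by move=> M; rewrite inE => pmM; rewrite pm_partner.
rewrite exchange_big /=; apply: eq_bigr => y /andP[yV axy].
rewrite sum_nat_bool_card.
have xyN N : is_perfect_matching (V :\: [set x; y]) adj N -> [set x; y] \notin N.
  by move=> pmN; apply/negP => /(pm_sub pmN)/subsetP/(_ x (setU11 _ _)); rewrite !inE eqxx.
have inj : {in [set N | is_perfect_matching (V :\: [set x; y]) adj N] &,
             injective (fun N => [set x; y] |: N)}.
  move=> N1 N2; rewrite !inE => /xyN nxy1 /xyN nxy2 /= e.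
  by rewrite -(setU1K nxy1) -(setU1K nxy2) e.
rewrite -(card_in_imset inj); apply: eq_card => M.
apply/idP/imsetP => [|[N]]; rewrite !inE.
  by case/andP=> pmM xyM; exists (M :\ [set x; y]); rewrite ?inE ?pm_setD1 ?setD1K.
by move=> pmN ->; rewrite setU11 andbT pm_setU1.
Qed.

End PerfectMatchings.

Section EdgeDeletion.

Variables (T : finType) (adj : rel T).
Hypotheses (adj_sym : symmetric adj) (adj_irr : irreflexive adj).

Definition del_edge (x y : T) : rel T := fun u v =>
  adj u v && ~~ (((u == x) && (v == y)) || ((u == y) && (v == x))).

Lemma del_edge_sym x y : symmetric (del_edge x y).
Proof. by move=> u v; rewrite /del_edge adj_sym orbC (andbC (u == y)) (andbC (u == x)). Qed.

Lemma del_edge_irr x y : irreflexive (del_edge x y).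
Proof. by move=> u; rewrite /del_edge adj_irr. Qed.

Lemma num_pm_del_edge (V : {set T}) x y : adj x y -> x \in V -> y \in V ->
  num_pm V adj = num_pm V (del_edge x y) + num_pm (V :\: [set x; y]) adj.
Proof.
move=> axy xV yV; have nxy := adj_neq adj_irr axy.
rewrite (num_pm_expand adj_sym adj_irr xV) (num_pm_expand (del_edge_sym x y) (del_edge_irr x y) xV).
rewrite (bigD1 y) /=; last by rewrite yV axy.
rewrite addnC; congr (_ + _); apply: eq_big => [z|z /andP[/andP[zV _] _]].
  by rewrite /del_edge eqxx (negbTE nxy) orbF andbA.
apply: eq_num_pm => u v; rewrite !inE /del_edge.
by case/andP=> /norP[/negbTE-> _] _ /andP[/norP[/negbTE-> _] _]; rewrite andbF andbT.
Qed.

End EdgeDeletion.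

Section ChannelParity.

Variables (T : finType) (adj : rel T).
Hypotheses (adj_sym : symmetric adj) (adj_irr : irreflexive adj).

Section MatchingsAt.

Variables (V C : {set T}) (c0 : T).
Hypotheses (CV : C \subset V) (c0C : c0 \in C).

Let c0V : c0 \in V. Proof. exact: subsetP CV c0 c0C. Qed.

Let match_c0 (c : T) : nat :=
  \sum_(y in V | adj c y && (y != c0)) num_pm (V :\: [set c0; y]) adj.

Let num_pm_match_c0 : num_pm V adj = match_c0 c0.
Proof.
rewrite (num_pm_expand adj_sym adj_irr c0V); apply: eq_bigl => y.
by case: (boolP (adj c0 y)) => [/(adj_neq adj_irr)|]; rewrite ?andbF // eq_sym => ->.
Qed.

Let even_match_c0 c : c \in C -> c != c0 -> ~~ odd (match_c0 c).
Proof.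
move=> cC ncc0; have cV := subsetP CV c cC.
pose N := [set y in V | adj c y && (y != c0)].
rewrite /match_c0 (eq_bigl (fun y => y \in N)) => [|y]; last by rewrite inE.
rewrite (eq_bigr (fun y => \sum_(z in N | z != y)
           num_pm (V :\: [set c0; y] :\: [set c; z]) adj)) => [|y].
  apply: (even_sum_offdiag N) => y z; congr (num_pm _ adj); apply/setP => t; rewrite !inE.
  by case: (t == y); case: (t == z); case: (t == c); case: (t == c0).
rewrite inE => /and3P[yV acy nyc0].
have cVy : c \in V :\: [set c0; y].
  by rewrite !inE cV (negbTE ncc0) (negbTE (adj_neq adj_irr acy)).
rewrite (num_pm_expand adj_sym adj_irr cVy); apply: eq_bigl => z; rewrite !inE.
by case: (z == y); case: (z == c0); case: (z \in V); rewrite /= ?andbF ?andbT.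
Qed.

Hypothesis chC : forall v, v \in V -> ~~ odd #|[set u in C | adj v u]|.

Let even_sum_match : ~~ odd (\sum_(c in C) match_c0 c).
Proof.
rewrite /match_c0 (exchange_big_dep (fun y => (y \in V) && (y != c0))) /=;
  last by move=> c y _ /and3P[-> _ ->].
apply: even_sum => y /andP[yV nyc0].
rewrite (eq_bigl (mem [set u in C | adj y u])) => [|c]; last first.
  by rewrite !inE yV nyc0 adj_sym !andbT.
by rewrite sum_nat_const oddM (negbTE (chC yV)).
Qed.

Lemma channel_num_pm_even_at : ~~ odd (num_pm V adj).
Proof.
have even_rest : ~~ odd (\sum_(c in C | c != c0) match_c0 c).
  by apply: even_sum => c /andP[]; exact: even_match_c0.
by have := even_sum_match; rewrite (bigD1 c0) //= -num_pm_match_c0 oddD (negbTE even_rest) addbF.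
Qed.

End MatchingsAt.

Lemma channel_num_pm_even V C : is_channel V adj C -> C != set0 -> ~~ odd (num_pm V adj).
Proof.
case/andP=> CV /forallP chC /set0Pn[c0 c0C]; apply: (channel_num_pm_even_at CV c0C) => v vV.
by have := chC v; rewrite vV.
Qed.

End ChannelParity.

Lemma odd_num_pm_del_edge_channel (T : finType) (adj : rel T) (V C : {set T}) x y :
    symmetric adj -> irreflexive adj -> adj x y -> x \in V -> y \in V ->
    is_channel V (del_edge adj x y) C -> C != set0 ->
  odd (num_pm V adj) = odd (num_pm (V :\: [set x; y]) adj).
Proof.
move=> adj_sym adj_irr axy xV yV chC C0.
have := channel_num_pm_even (del_edge_sym adj_sym x y) (del_edge_irr adj_irr x y) chC C0.
by rewrite (num_pm_del_edge adj_sym adj_irr axy xV yV) oddD => /negbTE->.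
Qed.

Section NeighbourParity.

Variable T : finType.
Implicit Types (X Y : {set T}) (adj : rel T).

Definition odd_nbrs adj X (v : T) : bool := odd #|[set u in X | adj v u]|.

Definition symdiff X Y : {set T} := [set x | (x \in X) (+) (x \in Y)].

Definition odd_cover (I : finType) (F : I -> {set T}) (S : {set I}) : {set T} :=
  [set x | odd #|[set i in S | x \in F i]|].

Lemma symdiffK X Y : symdiff (symdiff X Y) Y = X.
Proof. by apply/setP => x; rewrite !inE addbK. Qed.

Lemma odd_nbrs_symdiff adj X Y v :
  odd_nbrs adj (symdiff X Y) v = odd_nbrs adj X v (+) odd_nbrs adj Y v.
Proof.
rewrite /odd_nbrs !odd_card_set -big_split /=; apply: eq_bigr => u _.
by rewrite !inE; case: (adj v u); rewrite ?andbT ?andbF.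
Qed.

Lemma odd_nbrs_odd_cover adj (I : finType) (F : I -> {set T}) S v :
  odd_nbrs adj (odd_cover F S) v = odd #|[set i in S | odd_nbrs adj (F i) v]|.
Proof.
rewrite /odd_nbrs !odd_card_set.
under eq_bigr => u _ do rewrite !inE odd_card_set big_distrl /=.
rewrite exchange_big /=; apply: eq_bigr => i _.
by rewrite odd_card_set big_distrr /=; apply: eq_bigr => u _; rewrite andbA.
Qed.

Lemma odd_nbrs_colored adj (col : T -> bool) X v :
    (forall x y, adj x y -> col x != col y) -> {in X, forall x, col x = col v} ->
  odd_nbrs adj X v = false.
Proof.
move=> adj_bip colX; rewrite /odd_nbrs (_ : [set u in X | adj v u] = set0) ?cards0 //.
apply/setP => u; rewrite !inE; apply/negbTE/andP => -[uX /adj_bip].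
by rewrite colX ?eqxx.
Qed.

Lemma black_channelsP (V : {set T}) adj (col : T -> bool) X :
  reflect [/\ X \subset V, {in V, forall v, ~~ odd_nbrs adj X v} & {in X, forall x, col x}]
          (X \in black_channels V adj col).
Proof.
rewrite inE /is_channel -andbA.
by apply: (iffP and3P) => -[XV /forall_inP chX /forall_inP blX]; split.
Qed.

End NeighbourParity.

Section DisjointEdges.

Variables (T : finType) (adj : rel T) (col : T -> bool).
Hypotheses (adj_sym : symmetric adj) (adj_bip : forall x y, adj x y -> col x != col y).
Variables (n : nat) (b w : 'I_n -> T).
Hypotheses (e_adj : forall i, adj (b i) (w i)).
Hypotheses (b_black : forall i, col (b i)) (w_white : forall i, ~~ col (w i)).
Hypotheses (b_inj : injective b) (w_inj : injective w).

Definition del_edges : rel T := fun x y =>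
  adj x y && ~~ [exists i, ((x == b i) && (y == w i)) || ((x == w i) && (y == b i))].

Definition edge_ends : {set T} := [set b i | i in 'I_n] :|: [set w i | i in 'I_n].

Variable B : 'I_n -> {set T}.
Hypotheses (B_chan : forall i, B i \in black_channels [set: T] del_edges col).
Hypotheses (B_neq0 : forall i, B i != set0) (B_b : forall i j, b j \in B i -> j = i).

Lemma adj_irr : irreflexive adj.
Proof. by move=> x; apply/negP => /adj_bip; rewrite eqxx. Qed.

Lemma w_in_ends j : w j \in edge_ends.
Proof. by rewrite !inE imset_f ?orbT. Qed.

Lemma b_in_ends j : b j \in edge_ends.
Proof. by rewrite !inE imset_f. Qed.

Lemma black_neq_w x j : col x -> x != w j.
Proof. by apply: contraTneq => ->; rewrite (negbTE (w_white j)). Qed.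

Lemma B_black i x : x \in B i -> col x.
Proof. by case/black_channelsP: (B_chan i) => _ _; apply. Qed.

Lemma B_even i v : ~~ odd_nbrs del_edges (B i) v.
Proof. by case/black_channelsP: (B_chan i) => _ + _; apply; rewrite inE. Qed.

Lemma del_edges_B i u v : u \in B i ->
  del_edges v u = adj v u && ~~ ((v == w i) && (u == b i)).
Proof.
move=> uB; have ub j := black_neq_w j (B_black uB); congr (_ && ~~ _).
apply/existsP/andP => [[j]|[/eqP-> /eqP->]]; last by exists i; rewrite !eqxx orbT.
rewrite (negbTE (ub j)) andbF /= => /andP[/eqP-> /eqP uj].
by move: uB; rewrite uj => /B_b->; rewrite !eqxx.
Qed.

Lemma mem_ends_seq (s : seq 'I_n) x :
  (x \in \bigcup_(j <- s) [set b j; w j]) = has (fun j => x \in [set b j; w j]) s.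
Proof. by rewrite bigcup_seq; apply/bigcupP/hasP. Qed.

Lemma odd_num_pm_del_ends_seq s : uniq s ->
  odd (num_pm [set: T] adj) = odd (num_pm (~: \bigcup_(j <- s) [set b j; w j]) adj).
Proof.
elim: s => [|i s IH] /=; first by rewrite big_nil setC0.
case/andP=> i_notin_s /IH->; rewrite big_cons setCU setIC -setDE.
set U := \bigcup_(j <- s) _.
have ne_i j : j \in s -> j != i by apply: contraTneq => ->.
have bU : b i \in ~: U.
  rewrite inE mem_ends_seq; apply/hasPn => j /ne_i nji; rewrite !inE.
  by rewrite (inj_eq b_inj) [i == j]eq_sym (negbTE nji) black_neq_w.
have wU : w i \in ~: U.
  rewrite inE mem_ends_seq; apply/hasPn => j /ne_i nji; rewrite !inE.
  by rewrite (inj_eq w_inj) [i == j]eq_sym (negbTE nji) orbF eq_sym black_neq_w.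
have BU : B i \subset ~: U.
  apply/subsetP => u uB; rewrite inE mem_ends_seq; apply/hasPn => j /ne_i nji; rewrite !inE.
  rewrite (negbTE (black_neq_w j (B_black uB))) orbF.
  by apply: contra nji => /eqP ubj; rewrite ubj in uB; rewrite (B_b uB).
apply: (odd_num_pm_del_edge_channel adj_sym adj_irr (e_adj i) bU wU _ (B_neq0 i)).
apply/andP; split => //; apply/forall_inP => v _.
rewrite (_ : [set u in B i | _] = [set u in B i | del_edges v u]); first exact: B_even.
apply/setP => u; rewrite !inE; case uB: (u \in B i) => //=.
by rewrite (del_edges_B _ uB) /del_edge (negbTE (black_neq_w i (B_black uB))) andbF.
Qed.

Lemma odd_num_pm_del_ends :
  odd (num_pm [set: T] adj) = odd (num_pm (~: edge_ends) adj).
Proof.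
have -> : edge_ends = \bigcup_(j <- enum 'I_n) [set b j; w j].
  apply/setP => x; rewrite mem_ends_seq !inE.
  apply/orP/hasP => [[]/imsetP[j _ ->]|[j _]].
  - by exists j; rewrite ?mem_enum // !inE eqxx.
  - by exists j; rewrite ?mem_enum // !inE eqxx orbT.
  - by rewrite !inE => /orP[]/eqP->; [left | right]; rewrite imset_f.
exact: odd_num_pm_del_ends_seq (enum_uniq _).
Qed.

Section BlackChannels.

Hypothesis b_in_B : forall i, b i \in B i.

Lemma odd_nbrs_B i v : odd_nbrs adj (B i) v = (v == w i).
Proof.
have B_adj u : u \in B i ->
    adj v u = del_edges v u (+) ((v == w i) && (u == b i)).
  move=> uB; rewrite (del_edges_B v uB).
  have [-> | _] := eqVneq v (w i); last by rewrite andbT addbF.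
  have [-> | _] := eqVneq u (b i); last by rewrite andbT addbF.
  by rewrite adj_sym e_adj.
rewrite /odd_nbrs odd_card_set.
transitivity (\big[addb/false]_u ((u \in B i) && del_edges v u)
              (+) \big[addb/false]_u ((v == w i) && (u == b i))).
  rewrite -big_split; apply: eq_bigr => u _ /=.
  case uB: (u \in B i); first exact: B_adj.
  by case: (u =P b i) uB => [->|]; rewrite ?b_in_B ?andbF.
rewrite -odd_card_set -/(odd_nbrs del_edges (B i) v) (negbTE (B_even i v)) /=.
rewrite -big_distrr -odd_card_set /=.
rewrite (_ : [set u | u == b i] = [set b i]) ?cards1 ?andbT //.
by apply/setP => u; rewrite !inE.
Qed.

Lemma odd_nbrs_cover (S : {set 'I_n}) v : odd_nbrs adj (odd_cover B S) v = (v \in w @: S).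
Proof.
rewrite odd_nbrs_odd_cover -(odd_card_inj _ _ w_inj); congr odd.
by apply: eq_card => i; rewrite !inE odd_nbrs_B.
Qed.

Lemma b_in_cover (S : {set 'I_n}) j : (b j \in odd_cover B S) = (j \in S).
Proof.
have bB i : (b j \in B i) = (b j == b i).
  by rewrite (inj_eq b_inj); apply/idP/eqP => [/B_b | ->].
rewrite inE -(mem_imset S j b_inj) -odd_card_inj //; congr odd.
by apply: eq_card => i; rewrite !inE bB.
Qed.

Lemma cover_black (S : {set 'I_n}) x : x \in odd_cover B S -> col x.
Proof. by rewrite inE => /odd_gt0/card_gt0P[i]; rewrite inE => /andP[_ /B_black]. Qed.

Definition restrict_channel (C : {set T}) : {set T} :=
  symdiff C (odd_cover B [set i | b i \in C]).

Definition extend_channel (C : {set T}) : {set T} :=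
  symdiff C (odd_cover B [set i | odd_nbrs adj C (w i)]).

Lemma black_symdiff_cover (C : {set T}) S : {in C, forall x, col x} ->
  {in symdiff C (odd_cover B S), forall x, col x}.
Proof. by move=> blC x; rewrite inE; case: (boolP (x \in C)) => [/blC | _ /cover_black]. Qed.

Lemma restrict_channel_in C : C \in black_channels [set: T] adj col ->
  restrict_channel C \in black_channels (~: edge_ends) adj col.
Proof.
case/black_channelsP => _ chC blC; have blR := @black_symdiff_cover C [set i | b i \in C] blC.
apply/black_channelsP; split => // [|v].
  apply/subsetP => x xR; rewrite inE !inE negb_or.
  apply/andP; split; apply/imsetP => -[j _ xj]; move: xR.
    by rewrite xj inE b_in_cover inE addbb.
  by move/blR; rewrite xj (negbTE (w_white j)).
rewrite inE odd_nbrs_symdiff odd_nbrs_cover (negbTE (chC v (in_setT v))) /=.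
by apply: contra => /imsetP[j _ ->]; exact: w_in_ends.
Qed.

Lemma extend_restrict C : C \in black_channels [set: T] adj col ->
  extend_channel (restrict_channel C) = C.
Proof.
case/black_channelsP => _ chC _; rewrite /extend_channel.
rewrite (_ : [set i | _] = [set i | b i \in C]) ?symdiffK //; apply/setP => i.
by rewrite !inE odd_nbrs_symdiff odd_nbrs_cover (negbTE (chC _ (in_setT _))) (mem_imset _ _ w_inj) inE.
Qed.

Lemma extend_channel_in C : C \in black_channels (~: edge_ends) adj col ->
  extend_channel C \in black_channels [set: T] adj col.
Proof.
case/black_channelsP => _ chC blC.
apply/black_channelsP; split; [exact: subsetT | move=> v _ | exact: black_symdiff_cover].
rewrite odd_nbrs_symdiff odd_nbrs_cover.
have [vV|] := boolP (v \in ~: edge_ends).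
  rewrite (negbTE (chC v vV)) /=; apply: contraL vV => /imsetP[j _ ->].
  by rewrite inE negbK w_in_ends.
rewrite inE negbK !inE => /orP[]/imsetP[j _ ->]; last by rewrite mem_imset // inE addbb.
rewrite (odd_nbrs_colored adj_bip) => [|x /blC ->]; last by rewrite b_black.
by apply/imsetP => -[k _ /eqP]; rewrite (negbTE (black_neq_w k (b_black j))).
Qed.

Lemma restrict_extend C : C \in black_channels (~: edge_ends) adj col ->
  restrict_channel (extend_channel C) = C.
Proof.
case/black_channelsP => CV _ _; rewrite /restrict_channel.
rewrite (_ : [set i | _] = [set i | odd_nbrs adj C (w i)]) ?symdiffK //; apply/setP => i.
have bC : b i \notin C by apply: contraTN (b_in_ends i) => /(subsetP CV); rewrite inE.
by rewrite inE [b i \in _]inE b_in_cover (negbTE bC).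
Qed.

Lemma card_black_channels_del_ends :
  #|black_channels [set: T] adj col| = #|black_channels (~: edge_ends) adj col|.
Proof.
exact: card_in_bij restrict_channel_in extend_channel_in extend_restrict restrict_extend.
Qed.

End BlackChannels.

End DisjointEdges.

Theorem theorem5p7 (T : finType) (adj : rel T) (col : T -> bool)
  (adj_sym : symmetric adj)
  (adj_bip : forall x y, adj x y -> col x != col y)
  (n : nat) (b w : 'I_n -> T)
  (e_adj : forall i, adj (b i) (w i))
  (b_black : forall i, col (b i)) (w_white : forall i, ~~ col (w i))
  (b_inj : injective b) (w_inj : injective w)
  (B : 'I_n -> {set T}) :
  let adj_e : rel T := fun x y =>
    adj x y && ~~ [exists i, ((x == b i) && (y == w i)) || ((x == w i) && (y == b i))] in
  let V' : {set T} := ~: ([set b i | i in 'I_n] :|: [set w i | i in 'I_n]) in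
  (forall i, B i \in black_channels [set: T] adj_e col) ->
  (forall i, B i != set0) ->
  (forall i j, b j \in B i -> j = i) ->
  odd (num_pm [set: T] adj) = odd (num_pm V' adj) /\
  ((forall i, b i \in B i) ->
     #|black_channels [set: T] adj col| = #|black_channels V' adj col|).
Proof.
move=> adj_e V' B_chan B_neq0 B_b.
split=> [|b_in_B].
  exact (odd_num_pm_del_ends adj_sym adj_bip e_adj b_black w_white b_inj w_inj B_chan B_neq0 B_b).
exact (card_black_channels_del_ends adj_sym adj_bip e_adj b_black w_white b_inj w_inj B_chan B_b b_in_B).
Qed.
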